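(* Let $\mathbf L\in\mathbb R_+^{n\times k}$. If there exist $\mathbf p\in\operatorname{relint}(\Delta_n)$ and $c\in\mathbb R_+$ such that $\mathbf p^\top\boldsymbol\ell_t=c$ for all $t\in[k]$, then $\mathrm{CCdim}(\mathbf L)\ge\operatorname{affdim}(\mathbf L)-1$.
   Context: Notation: $[m]=\{1,\dots,m\}$; $\Delta_n=\{\mathbf p\in\mathbb R_+^n:\sum_i p_i=1\}$, with relative interior the points having all entries strictly positive. A loss matrix $\mathbf L\in\mathbb R_+^{n\times k}$ has columns $\boldsymbol\ell_t$, $t\in[k]$; $\operatorname{affdim}(\mathbf L)$ is the dimension of the affine hull of $\{\boldsymbol\ell_1,\dots,\boldsymbol\ell_k\}$. Standing assumption: for each $t\in[k]$ there is $\mathbf q\in\Delta_n$ with $\operatorname{argmin}_{t'}\mathbf q^\top\boldsymbol\ell_{t'}=\{t\}$. A surrogate loss $\boldsymbol\psi:\mathcal C\to\mathbb R_+^n$ ($\mathcal C\subseteq\mathbb R^d$ convex) is $\mathbf L$-calibrated if there is $\mathrm{pred}:\mathcal C\to[k]$ such that for all $\mathbf q\in\Delta_n$: $\inf_{\mathbf u\in\mathcal C:\mathrm{pred}(\mathbf u)\notin\operatorname{argmin}_t\mathbf q^\top\boldsymbol\ell_t}\mathbf q^\top\boldsymbol\psi(\mathbf u)>\inf_{\mathbf u\in\mathcal C}\mathbf q^\top\boldsymbol\psi(\mathbf u)$. $\mathrm{CCdim}(\mathbf L)$ is the smallest $d\in\mathbb Z_+$ for which there exist a convex set $\mathcal C\subseteq\mathbb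 R^d$ and a convex (componentwise convex) $\mathbf L$-calibrated surrogate $\boldsymbol\psi:\mathcal C\to\mathbb R_+^n$ ($\infty$ if none exists). *)

From Stdlib Require Import Reals List.
Import ListNotations.
Open Scope R_scope.

(* Vectors in R^m are represented as functions nat -> R; only the
   coordinates 0..m-1 are meaningful. *)

Fixpoint rsum (m : nat) (f : nat -> R) : R :=
  match m with
  | O => 0
  | S m' => rsum m' f + f m'
  end.

Definition lsum (s : list nat) (f : nat -> R) : R :=
  fold_right (fun j acc => f j + acc) 0 s.

Definition dot (n : nat) (p v : nat -> R) : R := rsum n (fun i => p i * v i).

Definition in_simplex (n : nat) (q : nat -> R) : Prop :=
  (forall i, (i < n)%nat -> 0 <= q i) /\ rsum n q = 1.

Definition in_relint_simplex (n : nat) (q : nat -> R) : Prop :=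
  (forall i, (i < n)%nat -> 0 < q i) /\ rsum n q = 1.

Definition col (L : nat -> nat -> R) (t : nat) : nat -> R := fun i => L i t.

Definition nonneg_matrix (n k : nat) (L : nat -> nat -> R) : Prop :=
  forall i t, (i < n)%nat -> (t < k)%nat -> 0 <= L i t.

Definition in_argmin (n k : nat) (L : nat -> nat -> R) (q : nat -> R) (t : nat) : Prop :=
  (t < k)%nat /\ forall t', (t' < k)%nat -> dot n q (col L t) <= dot n q (col L t').

Definition standing_assumption (n k : nat) (L : nat -> nat -> R) : Prop :=
  forall t, (t < k)%nat ->
    exists q, in_simplex n q /\ (forall t', in_argmin n k L q t' <-> t' = t).

Definition convex_set (d : nat) (C : (nat -> R) -> Prop) : Prop :=
  (forall u, C u -> forall j, (d <= j)%nat -> u j = 0) /\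
  (forall u v lam, C u -> C v -> 0 <= lam <= 1 ->
     C (fun j => lam * u j + (1 - lam) * v j)).

Definition nonneg_surrogate (n : nat) (C : (nat -> R) -> Prop) (psi : (nat -> R) -> nat -> R) : Prop :=
  forall u, C u -> forall i, (i < n)%nat -> 0 <= psi u i.

Definition convex_surrogate (n : nat) (C : (nat -> R) -> Prop) (psi : (nat -> R) -> nat -> R) : Prop :=
  forall i u v lam, (i < n)%nat -> C u -> C v -> 0 <= lam <= 1 ->
    psi (fun j => lam * u j + (1 - lam) * v j) i <= lam * psi u i + (1 - lam) * psi v i.

(* inf_{u in C | S u} f u  >  inf_{u in C} f u, for f valued in R (infima taken
   in the extended reals, inf of the empty set = +infinity):
   some lower bound r of f on {S} is strictly above some value of f on C. *)
Definition inf_gt (C S : (nat -> R) -> Prop) (f : (nat -> R) -> R) : Prop :=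
  exists r, (forall u, C u -> S u -> r <= f u) /\ (exists u, C u /\ f u < r).

Definition calibrated (n k : nat) (L : nat -> nat -> R)
  (C : (nat -> R) -> Prop) (psi : (nat -> R) -> nat -> R) : Prop :=
  exists pred : (nat -> R) -> nat,
    (forall u, C u -> (pred u < k)%nat) /\
    forall q, in_simplex n q ->
      inf_gt C (fun u => ~ in_argmin n k L q (pred u)) (fun u => dot n q (psi u)).

(* d is admissible in the definition of CCdim(L): there is a convex set C in R^d
   and a convex L-calibrated surrogate psi : C -> R_+^n.
   CCdim(L) is the least admissible d (infinity if none). *)
Definition CCdim_admissible (n k : nat) (L : nat -> nat -> R) (d : nat) : Prop :=
  exists (C : (nat -> R) -> Prop) (psi : (nat -> R) -> nat -> R),
    convex_set d C /\ nonneg_surrogate n C psi /\ convex_surrogate n C psi /\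
    calibrated n k L C psi.

Definition aff_indep_cols (n k : nat) (L : nat -> nat -> R) (s : list nat) : Prop :=
  NoDup s /\ (forall j, In j s -> (j < k)%nat) /\
  forall lam : nat -> R,
    lsum s lam = 0 ->
    (forall i, (i < n)%nat -> lsum s (fun j => lam j * L i j) = 0) ->
    forall j, In j s -> lam j = 0.

(* affdim(L) = m: the affine hull of the columns has dimension m, i.e. the
   maximal number of affinely independent columns is m+1. *)
Definition is_affdim (n k : nat) (L : nat -> nat -> R) (m : nat) : Prop :=
  (exists s, aff_indep_cols n k L s /\ length s = S m) /\
  (forall s, aff_indep_cols n k L s -> (length s <= S m)%nat).

(* Let m = affdim(L), witnessed by affinely independent columns l_{s_0}, ..., l_{s_m}, and
   suppose a convex calibrated surrogate lives in dimension d < m.  For eta > 0 take a point u0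
   of the intrinsic core of C that is eta-optimal for p . psi.  Extending a linear minorant of a
   convex function one coordinate at a time (finite-dimensional Hahn-Banach) splits this
   approximate optimality into g_1, ..., g_n in R^d with sum_a g_a = 0 and
   g_a . (u - u0) <= p_a (psi_a(u) - psi_a(u0)) + eta.  As d < m, some nonzero lam makes the
   centered combination v(lam) of the column differences l_{s_j} - l_{s_0} satisfy
   sum_a v_a g_a / p_a = 0, and then u0 stays approximately optimal for every weighting
   p + tau v(lam).  Normalising lam and letting eta -> 0 along a convergent subsequence yields
   mu <> 0 and points arbitrarily close to optimal for both p + eps v(mu) and
   p - eps v(mu).  Calibration puts their predictions in both argmins, so v(mu) . l_t is
   constant in t, and affine independence of the columns forces mu = 0.  The argument gives
   d >= affdim(L). *)

From Stdlib Require Import Reals List Lra Lia Psatz Classical ClassicalEpsilon FunctionalExtensionality.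
Open Scope R_scope.

Lemma rsum_ext m f g : (forall i, (i < m)%nat -> f i = g i) -> rsum m f = rsum m g.
Proof.
  induction m as [|m IH]; intros H; simpl; auto.
  rewrite IH by (intros; apply H; lia). rewrite H by lia. reflexivity.
Qed.

Lemma rsum_plus m f g : rsum m (fun i => f i + g i) = rsum m f + rsum m g.
Proof. induction m; simpl; [lra|]. rewrite IHm. lra. Qed.

Lemma rsum_minus m f g : rsum m (fun i => f i - g i) = rsum m f - rsum m g.
Proof. induction m; simpl; [lra|]. rewrite IHm. lra. Qed.

Lemma rsum_scal_l m c f : rsum m (fun i => c * f i) = c * rsum m f.
Proof. induction m; simpl; [lra|]. rewrite IHm. lra. Qed.

Lemma rsum_scal_r m c f : rsum m (fun i => f i * c) = rsum m f * c.
Proof. induction m; simpl; [lra|]. rewrite IHm. lra. Qed.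

Lemma rsum_const m c : rsum m (fun _ => c) = INR m * c.
Proof. induction m; simpl rsum; [simpl; ring|]. rewrite IHm, S_INR. ring. Qed.

Lemma rsum_eq0 m f : (forall i, (i < m)%nat -> f i = 0) -> rsum m f = 0.
Proof. intros H. rewrite (rsum_ext m f (fun _ => 0)) by auto. rewrite rsum_const. ring. Qed.

Lemma rsum_le m f g : (forall i, (i < m)%nat -> f i <= g i) -> rsum m f <= rsum m g.
Proof.
  induction m as [|m IH]; intros H; simpl; [lra|].
  pose proof (IH (fun i Hi => H i ltac:(lia))). pose proof (H m ltac:(lia)). lra.
Qed.

Lemma rsum_ge0 m f : (forall i, (i < m)%nat -> 0 <= f i) -> 0 <= rsum m f.
Proof. intros H. rewrite <- (rsum_eq0 m (fun _ => 0)) by auto. apply rsum_le; auto. Qed.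

Lemma rsum_ge0_eq0 m f : (forall i, (i < m)%nat -> 0 <= f i) -> rsum m f = 0 ->
  forall i, (i < m)%nat -> f i = 0.
Proof.
  induction m as [|m IH]; intros H Hs i Hi; [lia|]. simpl in Hs.
  pose proof (rsum_ge0 m f (fun j Hj => H j ltac:(lia))). pose proof (H m ltac:(lia)).
  destruct (Nat.eq_dec i m); [subst; lra|]. apply IH; [intros; apply H; lia|lra|lia].
Qed.

Lemma rsum_term_le m f i : (forall j, (j < m)%nat -> 0 <= f j) -> (i < m)%nat -> f i <= rsum m f.
Proof.
  induction m as [|m IH]; intros H Hi; [lia|]. simpl.
  pose proof (rsum_ge0 m f (fun j Hj => H j ltac:(lia))). pose proof (H m ltac:(lia)).
  destruct (Nat.eq_dec i m); [subst; lra|].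
  pose proof (IH (fun j Hj => H j ltac:(lia)) ltac:(lia)). lra.
Qed.

Lemma Rabs_rsum_le m f : Rabs (rsum m f) <= rsum m (fun i => Rabs (f i)).
Proof.
  induction m; simpl; [rewrite Rabs_R0; lra|].
  eapply Rle_trans; [apply Rabs_triang|lra].
Qed.

Lemma rsum_swap m n (f : nat -> nat -> R) :
  rsum m (fun i => rsum n (fun j => f i j)) = rsum n (fun j => rsum m (fun i => f i j)).
Proof.
  induction m; simpl.
  - symmetry; apply rsum_eq0; auto.
  - rewrite IHm, <- rsum_plus. reflexivity.
Qed.

Lemma rsum_shift m f : rsum (S m) f = f O + rsum m (fun i => f (S i)).
Proof. induction m; simpl in *; [lra|]. rewrite IHm. lra. Qed.

Lemma rsum_add_len a b f : rsum (a + b) f = rsum a f + rsum b (fun i => f (a + i)%nat).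
Proof.
  induction b; simpl.
  - rewrite Nat.add_0_r. lra.
  - rewrite Nat.add_succ_r. simpl. rewrite IHb. lra.
Qed.

Lemma rsum_blocks N d F :
  rsum (N * d) F = rsum N (fun b => rsum d (fun k => F (b * d + k)%nat)).
Proof.
  induction N; simpl; [reflexivity|].
  rewrite Nat.add_comm, rsum_add_len, IHN. lra.
Qed.

Lemma block_index_inj d b b' k k' : (k < d)%nat -> (k' < d)%nat ->
  (b * d + k = b' * d + k')%nat -> b = b' /\ k = k'.
Proof.
  intros Hk Hk' E. destruct (Nat.lt_trichotomy b b') as [H|[H|H]].
  - assert (S b * d <= b' * d)%nat by (apply Nat.mul_le_mono_r; lia). simpl in *. lia.
  - subst. lia.
  - assert (S b' * d <= b * d)%nat by (apply Nat.mul_le_mono_r; lia). simpl in *. lia.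
Qed.

Lemma rsum_delta m j (a : nat -> R) : (j < m)%nat ->
  rsum m (fun i => if Nat.eq_dec i j then a i else 0) = a j.
Proof.
  induction m as [|m IH]; intros H; [lia|]. simpl.
  destruct (Nat.eq_dec m j).
  - subst. rewrite rsum_eq0; [lra|]. intros i Hi. destruct (Nat.eq_dec i j); [lia|auto].
  - rewrite IH by lia. lra.
Qed.

Lemma rsum_mul_delta m j (a : nat -> R) : (j < m)%nat ->
  rsum m (fun c => a c * (if Nat.eq_dec c j then 1 else 0)) = a j.
Proof.
  intros Hj. rewrite <- (rsum_delta m j a Hj). apply rsum_ext. intros c _.
  destruct (Nat.eq_dec c j); ring.
Qed.

Lemma rsum_sq_eq0 m f : rsum m (fun i => f i * f i) = 0 -> forall i, (i < m)%nat -> f i = 0.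
Proof.
  intros H i Hi. assert (f i * f i = 0); [|nra].
  apply (rsum_ge0_eq0 m (fun i => f i * f i)); auto. intros; nra.
Qed.

Lemma dot_extend N r (lam : nat -> R) x :
  dot (S N) r (fun k => if Nat.eq_dec k N then x else lam k) = dot N r lam + r N * x.
Proof.
  unfold dot; simpl. destruct (Nat.eq_dec N N); [|lia]. f_equal.
  apply rsum_ext. intros k Hk. destruct (Nat.eq_dec k N); [lia|reflexivity].
Qed.

Lemma homogeneous_rows_nontrivial N (rows : list (nat -> R)) :
  (length rows < N)%nat ->
  exists lam, (exists k, (k < N)%nat /\ lam k <> 0) /\ Forall (fun r => dot N r lam = 0) rows.
Proof.
  revert rows; induction N as [|N IH]; intros rows Hlen; [lia|].
  destruct (classic (exists r0, In r0 rows /\ r0 N <> 0)) as [[r0 [Hin Hr0]]|Hnone].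
  - (* Gaussian elimination of the last unknown, pivoting on the row r0 *)
    destruct (in_split _ _ Hin) as [l1 [l2 ->]].
    set (elim := fun (r : nat -> R) k => r k - r N / r0 N * r0 k).
    destruct (IH (map elim (l1 ++ l2))) as [lam [[k [Hk Hnz]] Hsol]].
    { rewrite length_map, length_app. rewrite length_app in Hlen. simpl in Hlen. lia. }
    exists (fun k => if Nat.eq_dec k N then - dot N r0 lam / r0 N else lam k). split.
    + exists k. split; [lia|]. destruct (Nat.eq_dec k N); [lia|auto].
    + apply Forall_forall. intros r Hr. rewrite dot_extend.
      destruct (in_elt_inv _ _ _ _ Hr) as [->|Hr']; [field; auto|].
      assert (Hel : dot N (elim r) lam = dot N r lam - r N / r0 N * dot N r0 lam).
      { unfold dot, elim. rewrite <- rsum_scal_l, <- rsum_minus. apply rsum_ext. intros; ring. }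
      rewrite Forall_forall in Hsol. specialize (Hsol (elim r) (in_map _ _ _ Hr')).
      rewrite Hel in Hsol. replace (dot N r lam) with (r N / r0 N * dot N r0 lam) by lra.
      field; auto.
  - exists (fun k => if Nat.eq_dec k N then 1 else 0). split.
    + exists N. split; [lia|]. destruct (Nat.eq_dec N N); [lra|lia].
    + apply Forall_forall. intros r Hr.
      replace (fun k => if Nat.eq_dec k N then 1 else 0) with
        (fun k => if Nat.eq_dec k N then 1 else (fun _ => 0) k) by reflexivity.
      rewrite dot_extend. unfold dot. rewrite rsum_eq0 by (intros; ring).
      assert (r N = 0) by (apply NNPP; intro; apply Hnone; eauto). nra.
Qed.

Lemma homogeneous_system_nontrivial N M (a : nat -> nat -> R) : (M < N)%nat ->
  exists lam, (exists k, (k < N)%nat /\ lam k <> 0) /\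
    forall i, (i < M)%nat -> dot N (a i) lam = 0.
Proof.
  intros HMN. destruct (homogeneous_rows_nontrivial N (map a (seq 0 M))) as [lam [Hnz Hsol]].
  { rewrite length_map, length_seq. auto. }
  exists lam. split; auto. intros i Hi. rewrite Forall_forall in Hsol. apply Hsol.
  apply in_map, in_seq. lia.
Qed.

(** * Linear minorants of convex functions *)

Lemma dot_comb_r N g x y lam mu :
  dot N g (fun c => lam * x c + mu * y c) = lam * dot N g x + mu * dot N g y.
Proof. unfold dot. rewrite <- !rsum_scal_l, <- rsum_plus. apply rsum_ext. intros; ring. Qed.

Lemma div_neg_le_div_pos A B a b : a < 0 -> 0 < b -> B * a <= A * b -> A / a <= B / b.
Proof.
  intros Ha Hb H. replace (A / a) with (A * b * / (a * b)) by (field; lra).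
  replace (B / b) with (B * a * / (a * b)) by (field; lra).
  assert (/ (a * b) < 0) by (apply Rinv_lt_0_compat; nra). nra.
Qed.

Definition supported_below (j : nat) (x : nat -> R) : Prop := forall c, (j <= c)%nat -> x c = 0.

Section LinearMinorant.
Variables (D : (nat -> R) -> Prop) (phi : (nat -> R) -> R).
Hypothesis D_convex : forall x y lam, D x -> D y -> 0 <= lam <= 1 ->
  D (fun c => lam * x c + (1 - lam) * y c).
Hypothesis D_absorbing : forall x, D x -> exists r, 0 < r /\ D (fun c => - r * x c).
Hypothesis phi_convex : forall x y lam, D x -> D y -> 0 <= lam <= 1 ->
  phi (fun c => lam * x c + (1 - lam) * y c) <= lam * phi x + (1 - lam) * phi y.

Lemma minorant_slopes_ordered j g :
  (forall x, D x -> supported_below j x -> dot j g x <= phi x) ->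
  forall x y, D x -> D y -> supported_below (S j) x -> supported_below (S j) y ->
  x j < 0 -> 0 < y j -> (phi x - dot j g x) / x j <= (phi y - dot j g y) / y j.
Proof.
  intros Hg x y Dx Dy Sx Sy Hx Hy.
  set (lam := y j / (y j - x j)).
  assert (Hlam : 0 <= lam <= 1).
  { unfold lam. split; [apply Rmult_le_pos; [lra|left; apply Rinv_0_lt_compat; lra]|].
    apply Rmult_le_reg_r with (y j - x j); [lra|]. field_simplify; lra. }
  set (M := fun c => lam * x c + (1 - lam) * y c).
  assert (SM : supported_below j M).
  { intros c Hc. unfold M. destruct (Nat.eq_dec c j) as [->|].
    - unfold lam. field. lra.
    - rewrite Sx, Sy by lia. ring. }
  pose proof (Hg M (D_convex x y lam Dx Dy Hlam) SM) as HM.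
  pose proof (phi_convex x y lam Dx Dy Hlam) as Hc. fold M in Hc.
  unfold M in HM at 1. rewrite dot_comb_r in HM.
  apply div_neg_le_div_pos; auto.
  assert (E : (phi x - dot j g x) * y j - (phi y - dot j g y) * x j =
    (y j - x j) * (lam * (phi x - dot j g x) + (1 - lam) * (phi y - dot j g y)))
    by (unfold lam; field; lra).
  nra.
Qed.

Definition lower_slope j g z : Prop :=
  exists x, D x /\ supported_below (S j) x /\ x j < 0 /\ z = (phi x - dot j g x) / x j.

Definition upper_slope j g z : Prop :=
  exists x, D x /\ supported_below (S j) x /\ 0 < x j /\ z = (phi x - dot j g x) / x j.

Lemma D_sign_flip j x : D x -> supported_below (S j) x -> x j <> 0 ->
  exists y, D y /\ supported_below (S j) y /\ x j * y j < 0.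
Proof.
  intros Dx Sx Hx0. destruct (D_absorbing x Dx) as [r [Hr Dr]]. exists (fun c => - r * x c).
  split; [auto|split]; [intros c Hc; rewrite Sx by lia; ring|].
  assert (0 < x j * x j) by (apply Rsqr_pos_lt; auto). nra.
Qed.

Lemma lower_slope_upper_slope j g z : lower_slope j g z -> exists z', upper_slope j g z'.
Proof.
  intros [x [Dx [Sx [Hx _]]]]. destruct (D_sign_flip j x Dx Sx ltac:(lra)) as [y [Dy [Sy Hy]]].
  exists ((phi y - dot j g y) / y j), y. repeat split; auto. nra.
Qed.

Lemma upper_slope_lower_slope j g z : upper_slope j g z -> exists z', lower_slope j g z'.
Proof.
  intros [x [Dx [Sx [Hx _]]]]. destruct (D_sign_flip j x Dx Sx ltac:(lra)) as [y [Dy [Sy Hy]]].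
  exists ((phi y - dot j g y) / y j), y. repeat split; auto. nra.
Qed.

Lemma minorant_extend_between j g a :
  (forall x, D x -> supported_below j x -> dot j g x <= phi x) ->
  (forall z, lower_slope j g z -> z <= a) -> (forall z, upper_slope j g z -> a <= z) ->
  forall x, D x -> supported_below (S j) x -> dot j g x + a * x j <= phi x.
Proof.
  intros Hg Hlo Hup x Dx Sx. destruct (Rtotal_order (x j) 0) as [Hn|[H0|Hp]].
  - pose proof (Hlo _ (ex_intro _ x (conj Dx (conj Sx (conj Hn eq_refl))))) as H.
    apply Rmult_le_compat_neg_l with (r := x j) in H; [|lra].
    replace (x j * ((phi x - dot j g x) / x j)) with (phi x - dot j g x) in H by (field; lra). lra.
  - rewrite H0, Rmult_0_r, Rplus_0_r. apply Hg; auto.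
    intros c Hc. destruct (Nat.eq_dec c j) as [->|]; auto. apply Sx. lia.
  - pose proof (Hup _ (ex_intro _ x (conj Dx (conj Sx (conj Hp eq_refl))))) as H.
    apply Rmult_le_compat_r with (r := x j) in H; [|lra].
    replace ((phi x - dot j g x) / x j * x j) with (phi x - dot j g x) in H by (field; lra). lra.
Qed.

Lemma minorant_extend_step j g :
  (forall x, D x -> supported_below j x -> dot j g x <= phi x) ->
  exists a, forall x, D x -> supported_below (S j) x -> dot j g x + a * x j <= phi x.
Proof.
  intros Hg.
  assert (Hord : forall z1 z2, lower_slope j g z1 -> upper_slope j g z2 -> z1 <= z2).
  { intros z1 z2 [x [Dx [Sx [Hx ->]]]] [y [Dy [Sy [Hy ->]]]]. apply minorant_slopes_ordered; auto. }
  destruct (classic (exists z, lower_slope j g z)) as [[z0 Hz0]|Hnone].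
  - destruct (lower_slope_upper_slope j g z0 Hz0) as [z1 Hz1].
    destruct (completeness (lower_slope j g) (ex_intro _ z1 (fun z Hz => Hord z z1 Hz Hz1))
                (ex_intro _ z0 Hz0)) as [a [Hub Hlub]].
    exists a. apply minorant_extend_between; auto.
    intros z Hz. apply Hlub. intros z' Hz'. apply Hord; auto.
  - (* no slopes at all: every x in D vanishes at j, and any a will do *)
    exists 0. apply minorant_extend_between; auto; intros z Hz; exfalso; apply Hnone.
    + exists z. auto.
    + apply (upper_slope_lower_slope j g z Hz).
Qed.

Lemma minorant_extend j0 :
  (forall x, D x -> supported_below j0 x -> 0 <= phi x) ->
  forall j, (j0 <= j)%nat -> exists g, (forall c, (c < j0)%nat -> g c = 0) /\
    forall x, D x -> supported_below j x -> dot j g x <= phi x.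
Proof.
  intros H0 j Hj. induction Hj as [|j Hj IH].
  - exists (fun _ => 0). split; auto. intros x Dx Sx. unfold dot.
    rewrite rsum_eq0 by (intros; ring). auto.
  - destruct IH as [g [Hg0 Hg]]. destruct (minorant_extend_step j g Hg) as [a Ha].
    exists (fun c => if Nat.eq_dec c j then a else g c). split.
    + intros c Hc. destruct (Nat.eq_dec c j); [lia|auto].
    + intros x Dx Sx. unfold dot; simpl. destruct (Nat.eq_dec j j); [|lia].
      rewrite (rsum_ext j _ (fun c => g c * x c)); [apply Ha; auto|].
      intros c Hc. destruct (Nat.eq_dec c j); [lia|reflexivity].
Qed.

End LinearMinorant.

Lemma eventually_inv_INR_le eta : 0 < eta -> exists N0, forall N, (N0 <= N)%nat -> / INR (S N) <= eta.
Proof.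
  intros Heta. destruct (archimed_cor1 eta Heta) as [N0 [HN0 Hpos]]. exists N0. intros N HN.
  left. eapply Rle_lt_trans; [|exact HN0]. apply Rinv_le_contravar; [apply lt_0_INR; auto|].
  apply le_INR. lia.
Qed.

Definition increasing_index (phi : nat -> nat) : Prop := forall N, (phi N < phi (S N))%nat.

Lemma increasing_index_ge phi : increasing_index phi -> forall N, (N <= phi N)%nat.
Proof. intros H N. induction N; [lia|]. specialize (H N). lia. Qed.

Lemma increasing_index_mono phi : increasing_index phi -> forall a b, (a <= b)%nat -> (phi a <= phi b)%nat.
Proof. intros H a b Hab. induction Hab; auto. specialize (H m). lia. Qed.

Lemma Un_cv_subseq u l phi : increasing_index phi -> Un_cv u l -> Un_cv (fun N => u (phi N)) l.
Proof.
  intros Hp Hc eps He. destruct (Hc eps He) as [N HN]. exists N. intros n Hn.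
  apply HN. pose proof (increasing_index_ge phi Hp n). lia.
Qed.

Lemma bounded_seq_convergent_subseq (y : nat -> R) : (forall N, -1 <= y N <= 1) ->
  exists phi, increasing_index phi /\ exists l, Un_cv (fun N => y (phi N)) l.
Proof.
  intros Hb.
  destruct (Bolzano_Weierstrass y (fun c => -1 <= c <= 1) (compact_P3 (-1) 1) Hb) as [l Hl].
  assert (sel : forall N K, {p | (K <= p)%nat /\ R_dist (y p) l < / INR (S N)}).
  { intros N K. apply constructive_indefinite_description.
    assert (Hpos : 0 < / INR (S N)) by (apply Rinv_0_lt_compat, lt_0_INR; lia).
    destruct (Hl (disc l (mkposreal _ Hpos)) K) as [p [Hp Hv]]; [|exists p; auto].
    exists (mkposreal _ Hpos). intros z Hz. exact Hz. }
  set (phi := fix phi N := match N with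
                           | O => proj1_sig (sel O O)
                           | S N' => proj1_sig (sel (S N') (S (phi N'))) end).
  assert (Hphi : forall N, R_dist (y (phi N)) l < / INR (S N)).
  { intros [|N]; [exact (proj2 (proj2_sig (sel O O)))|].
    exact (proj2 (proj2_sig (sel (S N) (S (phi N))))). }
  exists phi. split.
  - intros N. exact (proj1 (proj2_sig (sel (S N) (S (phi N))))).
  - exists l. intros eps He. destruct (eventually_inv_INR_le eps He) as [N0 HN0].
    exists N0. intros N HN. eapply Rlt_le_trans; [exact (Hphi N)|]. apply HN0. lia.
Qed.

Definition unit_box (m : nat) (lam : nat -> R) : Prop := forall j, (j < m)%nat -> -1 <= lam j <= 1.

Lemma bounded_vec_seq_convergent_subseq m (x : nat -> nat -> R) : (forall N, unit_box m (x N)) ->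
  exists phi, increasing_index phi /\
    exists L, forall j, (j < m)%nat -> Un_cv (fun N => x (phi N) j) (L j).
Proof.
  induction m as [|m IH]; intros Hb.
  - exists (fun N => N). split; [intros N; lia|]. exists (fun _ => 0). intros; lia.
  - destruct (IH (fun N j Hj => Hb N j ltac:(lia))) as [phi [Hphi [L HL]]].
    destruct (bounded_seq_convergent_subseq (fun N => x (phi N) m) (fun N => Hb (phi N) m ltac:(lia)))
      as [ps [Hps [l Hl]]].
    exists (fun N => phi (ps N)). split.
    + intros N. pose proof (increasing_index_mono phi Hphi (S (ps N)) (ps (S N)) (Hps N)).
      pose proof (Hphi (ps N)). lia.
    + exists (fun j => if Nat.eq_dec j m then l else L j). intros j Hj.
      destruct (Nat.eq_dec j m) as [->|]; [exact Hl|].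
      apply (Un_cv_subseq (fun N => x (phi N) j)); auto. apply HL. lia.
Qed.

Lemma Un_cv_uniform m (u : nat -> nat -> R) L :
  (forall j, (j < m)%nat -> Un_cv (fun N => u N j) (L j)) ->
  forall eps, 0 < eps -> exists N0, forall N, (N0 <= N)%nat ->
    forall j, (j < m)%nat -> Rabs (u N j - L j) < eps.
Proof.
  induction m as [|m IH]; intros H eps He.
  - exists O. intros; lia.
  - destruct (IH (fun j Hj => H j ltac:(lia)) eps He) as [N1 H1].
    destruct (H m ltac:(lia) eps He) as [N2 H2].
    exists (max N1 N2). intros N HN j Hj. destruct (Nat.eq_dec j m) as [->|].
    + apply H2. lia.
    + apply H1; lia.
Qed.

Lemma bounded_vec_seq_cluster_point m (x : nat -> nat -> R) : (forall N, unit_box m (x N)) ->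
  exists L, forall rho, 0 < rho -> forall N0, exists N, (N0 <= N)%nat /\
    forall j, (j < m)%nat -> Rabs (x N j - L j) < rho.
Proof.
  intros Hb. destruct (bounded_vec_seq_convergent_subseq m x Hb) as [phi [Hphi [L HL]]].
  exists L. intros rho Hrho N0.
  destruct (Un_cv_uniform m (fun N j => x (phi N) j) L HL rho Hrho) as [N1 H1].
  exists (phi (max N0 N1)). split.
  - pose proof (increasing_index_ge phi Hphi (max N0 N1)). lia.
  - apply H1. lia.
Qed.

(** * Convex sets and their intrinsic core *)

Definition aff_indep_family (N : nat) (U : nat -> nat -> R) : Prop :=
  forall lam, rsum N lam = 0 -> (forall j, rsum N (fun k => lam k * U k j) = 0) ->
    forall k, (k < N)%nat -> lam k = 0.

Definition affine_span (N : nat) (U : nat -> nat -> R) (u : nat -> R) : Prop :=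
  exists nu, rsum N nu = 1 /\ forall j, u j = rsum N (fun k => nu k * U k j).

Lemma aff_indep_family_extend N U u : aff_indep_family N U -> ~ affine_span N U u ->
  aff_indep_family (S N) (fun k => if Nat.eq_dec k N then u else U k).
Proof.
  intros HA Hu lam Hs Heq.
  assert (Hold : forall j, rsum N (fun k => lam k * U k j) = - (lam N * u j)).
  { intros j. specialize (Heq j). simpl in Heq. destruct (Nat.eq_dec N N); [|lia].
    rewrite (rsum_ext N _ (fun k => lam k * U k j)) in Heq
      by (intros k Hk; destruct (Nat.eq_dec k N); [lia|auto]). lra. }
  simpl in Hs.
  assert (HlN : lam N = 0).
  { apply NNPP. intro HlN. apply Hu. exists (fun k => - lam k / lam N). split.
    - unfold Rdiv. rewrite (rsum_ext N _ (fun k => lam k * (- / lam N))) by (intros; ring).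
      rewrite rsum_scal_r. replace (rsum N lam) with (- lam N) by lra. field; auto.
    - intros j. unfold Rdiv. rewrite (rsum_ext N _ (fun k => lam k * U k j * (- / lam N))) by (intros; ring).
      rewrite rsum_scal_r, Hold. field; auto. }
  intros k Hk. destruct (Nat.eq_dec k N) as [->|]; auto.
  apply HA; [lra| |lia]. intros j. rewrite Hold, HlN. ring.
Qed.

Definition in_intrinsic_core (C : (nat -> R) -> Prop) (u0 : nat -> R) : Prop :=
  C u0 /\ forall u, C u -> exists r, 0 < r /\ C (fun j => u0 j - r * (u j - u0 j)).

Section ConvexSet.
Variables (d : nat) (C : (nat -> R) -> Prop).
Hypothesis HC : convex_set d C.

Lemma convex_set_comb u v lam : C u -> C v -> 0 <= lam <= 1 ->
  C (fun j => lam * u j + (1 - lam) * v j).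
Proof. intros. apply (proj2 HC); auto. Qed.

Lemma convex_set_finite_comb N U mu : (forall k, (k < N)%nat -> C (U k)) ->
  (forall k, (k < N)%nat -> 0 <= mu k) -> rsum N mu = 1 ->
  C (fun j => rsum N (fun k => mu k * U k j)).
Proof.
  revert U mu; induction N as [|N IH]; intros U mu HU Hmu Hs; simpl in Hs; [lra|].
  set (Sm := rsum N mu).
  assert (HSm : 0 <= Sm) by (apply rsum_ge0; intros; apply Hmu; lia).
  pose proof (Hmu N ltac:(lia)) as HmuN.
  destruct (Req_dec Sm 0) as [E|E].
  - assert (Z : forall k, (k < N)%nat -> mu k = 0)
      by (apply rsum_ge0_eq0; [intros; apply Hmu; lia|auto]).
    replace (fun j => rsum (S N) (fun k => mu k * U k j)) with (U N); [apply HU; lia|].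
    apply functional_extensionality; intros j. simpl.
    rewrite rsum_eq0 by (intros k Hk; rewrite Z by auto; ring).
    replace (mu N) with 1 by (fold Sm in Hs; lra). ring.
  - assert (HV : C (fun j => rsum N (fun k => (mu k / Sm) * U k j))).
    { apply IH; [intros; apply HU; lia| |].
      + intros k Hk. unfold Rdiv. apply Rmult_le_pos; [apply Hmu; lia|].
        left; apply Rinv_0_lt_compat; lra.
      + unfold Rdiv. rewrite rsum_scal_r. fold Sm. field. auto. }
    replace (fun j => rsum (S N) (fun k => mu k * U k j)) with
      (fun j => Sm * rsum N (fun k => mu k / Sm * U k j) + (1 - Sm) * U N j).
    + apply convex_set_comb; [exact HV|apply HU; lia|fold Sm in Hs; lra].
    + apply functional_extensionality; intros j. simpl. rewrite <- rsum_scal_l.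
      rewrite (rsum_ext N _ (fun k => mu k * U k j)) by (intros; field; auto).
      replace (1 - Sm) with (mu N) by (fold Sm in Hs; lra). ring.
Qed.

Lemma aff_indep_family_size_le N U : (forall k, (k < N)%nat -> C (U k)) ->
  aff_indep_family N U -> (N <= S d)%nat.
Proof.
  intros HU HA. destruct (Compare_dec.le_lt_dec N (S d)) as [H|H]; auto. exfalso.
  (* one equation for the weights, one for each coordinate below d *)
  set (a := fun i k => match i with O => 1 | S i' => U k i' end).
  destruct (homogeneous_system_nontrivial N (S d) a H) as [lam [[k0 [Hk0 Hnz]] Hrows]].
  apply Hnz, HA; auto.
  - rewrite <- (Hrows O ltac:(lia)). apply rsum_ext; intros; unfold a; ring.
  - intros j. destruct (Compare_dec.lt_dec j d).
    + rewrite <- (Hrows (S j) ltac:(lia)). apply rsum_ext; intros; unfold a; ring.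
    + apply rsum_eq0. intros k Hk. rewrite (proj1 HC (U k) (HU k Hk) j) by lia. ring.
Qed.

Lemma convex_set_finite_affine_basis : (exists u, C u) ->
  exists N U, (1 <= N)%nat /\ (forall k, (k < N)%nat -> C (U k)) /\
    forall u, C u -> affine_span N U u.
Proof.
  intros [u0 Hu0].
  set (P := fun N => exists U, (forall k, (k < N)%nat -> C (U k)) /\ aff_indep_family N U).
  assert (Hmax : exists N, (1 <= N)%nat /\ P N /\ ~ P (S N)).
  { apply NNPP. intro Hn.
    assert (Hall : forall j, P (S j)).
    { induction j as [|j IH].
      - exists (fun _ => u0). split; auto. intros lam Hs _ k Hk. simpl in Hs.
        replace k with O by lia. lra.
      - apply NNPP. intro. apply Hn. exists (S j). repeat split; auto. lia. }
    destruct (Hall (S d)) as [U [HU HA]]. pose proof (aff_indep_family_size_le _ U HU HA). lia. }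
  destruct Hmax as [N [HN [[U [HU HA]] HnP]]].
  exists N, U. repeat split; auto.
  intros u Hu. apply NNPP. intro Hsp. apply HnP.
  exists (fun k => if Nat.eq_dec k N then u else U k). split.
  - intros k Hk. destruct (Nat.eq_dec k N); auto. apply HU; lia.
  - apply aff_indep_family_extend; auto.
Qed.

Lemma intrinsic_core_shrink u0 u r r' : C u0 -> C (fun j => u0 j - r * (u j - u0 j)) -> 0 < r ->
  0 <= r' <= r -> C (fun j => u0 j - r' * (u j - u0 j)).
Proof.
  intros H0 H1 Hr Hr'.
  replace (fun j => u0 j - r' * (u j - u0 j)) with
    (fun j => r' / r * (u0 j - r * (u j - u0 j)) + (1 - r' / r) * u0 j).
  - apply convex_set_comb; auto. split.
    + unfold Rdiv. apply Rmult_le_pos; [lra|left; apply Rinv_0_lt_compat; lra].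
    + apply Rmult_le_reg_r with r; auto. field_simplify; lra.
  - apply functional_extensionality; intros; field; lra.
Qed.

Lemma barycenter_in_intrinsic_core N U : (1 <= N)%nat -> (forall k, (k < N)%nat -> C (U k)) ->
  (forall u, C u -> affine_span N U u) ->
  in_intrinsic_core C (fun j => rsum N (fun k => / INR N * U k j)).
Proof.
  intros HN HU Hspan.
  assert (HNp : 0 < INR N) by (apply lt_0_INR; lia).
  split.
  - apply convex_set_finite_comb; auto.
    + intros; left; apply Rinv_0_lt_compat; auto.
    + rewrite rsum_const. field. lra.
  - intros u Hu. destruct (Hspan u Hu) as [nu [Hnu Hu']].
    set (Sm := rsum N (fun k => Rabs (nu k))).
    assert (HS : 0 <= Sm) by (apply rsum_ge0; intros; apply Rabs_pos).
    (* small enough that the weights (1 + r) / N - r * nu k stay nonnegative *)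
    set (r := / (INR N * (1 + Sm))).
    assert (Hr : 0 < r) by (unfold r; apply Rinv_0_lt_compat; nra).
    exists r. split; auto.
    replace (fun j => rsum N (fun k => / INR N * U k j) - r * (u j - rsum N (fun k => / INR N * U k j)))
      with (fun j => rsum N (fun k => ((1 + r) / INR N - r * nu k) * U k j)).
    + apply convex_set_finite_comb; auto.
      * intros k Hk.
        assert (Hk' : r * nu k <= r * Sm).
        { apply Rmult_le_compat_l; [lra|]. pose proof (Rle_abs (nu k)).
          pose proof (rsum_term_le N (fun k => Rabs (nu k)) k (fun _ _ => Rabs_pos _) Hk). unfold Sm. lra. }
        assert (r * Sm * INR N <= 1).
        { unfold r. replace (/ (INR N * (1 + Sm)) * Sm * INR N) with (Sm / (1 + Sm)) by (field; lra).
          apply Rmult_le_reg_r with (1 + Sm); [lra|]. field_simplify; lra. }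
        assert (r * Sm <= / INR N).
        { apply Rmult_le_reg_r with (INR N); auto. rewrite Rinv_l; lra. }
        assert (0 < r / INR N) by (apply Rdiv_lt_0_compat; auto).
        replace ((1 + r) / INR N) with (/ INR N + r / INR N) by (field; lra). lra.
      * rewrite rsum_minus, rsum_const, rsum_scal_l, Hnu. field. lra.
    + apply functional_extensionality; intros j. rewrite (Hu' j).
      rewrite (rsum_ext N _ (fun k => (1 + r) * (/ INR N * U k j) - r * (nu k * U k j)))
        by (intros; unfold Rdiv; ring).
      rewrite rsum_minus, !rsum_scal_l. ring.
Qed.

Lemma intrinsic_core_nonempty : (exists u, C u) -> exists b, in_intrinsic_core C b.
Proof.
  intros Hne. destruct (convex_set_finite_affine_basis Hne) as [N [U [HN [HU Hspan]]]].
  eexists. apply barycenter_in_intrinsic_core; eauto.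
Qed.

Lemma intrinsic_core_mix b u1 s : in_intrinsic_core C b -> C u1 -> 0 < s <= 1 ->
  in_intrinsic_core C (fun j => s * b j + (1 - s) * u1 j).
Proof.
  intros [Hb HRb] Hu1 Hs. split; [apply convex_set_comb; auto; lra|].
  intros u Hu. destruct (HRb u Hu) as [rb [Hrb HCb]].
  set (r' := Rmin (rb / 2) (1 / 2)).
  assert (Hr'1 : r' <= rb / 2) by apply Rmin_l. assert (Hr'2 : r' <= 1 / 2) by apply Rmin_r.
  assert (Hr'p : 0 < r') by (unfold r'; apply Rmin_pos; lra).
  assert (P1 : C (fun j => b j - (2 * r') * (u j - b j)))
    by (apply (intrinsic_core_shrink b u rb); auto; lra).
  assert (P2 : C (fun j => (2 * r' * (1 - s)) * u1 j + (1 - (2 * r' * (1 - s))) * b j))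
    by (apply convex_set_comb; auto; nra).
  pose proof (convex_set_comb _ _ (1 / 2) P1 P2 ltac:(lra)) as Q.
  pose proof (convex_set_comb _ _ s Q Hu1 ltac:(lra)) as T.
  exists (s * r'). split; [nra|].
  match goal with |- C ?f => replace f with
    (fun j => s * (1 / 2 * (b j - 2 * r' * (u j - b j)) + (1 - 1 / 2) *
      (2 * r' * (1 - s) * u1 j + (1 - 2 * r' * (1 - s)) * b j)) + (1 - s) * u1 j); auto end.
  apply functional_extensionality; intros j. field.
Qed.

Lemma near_optimal_intrinsic_core_point (f : (nat -> R) -> R) eta :
  (forall u v lam, C u -> C v -> 0 <= lam <= 1 ->
     f (fun j => lam * u j + (1 - lam) * v j) <= lam * f u + (1 - lam) * f v) ->
  (forall u, C u -> 0 <= f u) -> (exists u, C u) -> 0 < eta ->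
  exists u0, in_intrinsic_core C u0 /\ forall u, C u -> f u0 <= f u + eta.
Proof.
  intros Hf Hf0 Hne Heta.
  destruct (intrinsic_core_nonempty Hne) as [b Hb].
  set (E := fun z => exists u, C u /\ z = - f u).
  destruct Hne as [ue Cue].
  destruct (completeness E) as [M [HMub HMlub]].
  { exists 0. intros z [u [Cu ->]]. pose proof (Hf0 u Cu). lra. }
  { exists (- f ue), ue. auto. }
  assert (Hlow : forall u, C u -> - M <= f u).
  { intros u Cu. assert (- f u <= M) by (apply HMub; exists u; auto). lra. }
  assert (Hu1 : exists u1, C u1 /\ f u1 < - M + eta / 2).
  { apply NNPP. intro Hno. assert (M <= M - eta / 2); [|lra].
    apply HMlub. intros z [u [Cu ->]]. apply Rnot_lt_le. intro. apply Hno. exists u. split; auto. lra. }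
  destruct Hu1 as [u1 [Cu1 Hu1]].
  pose proof (Hf0 b (proj1 Hb)) as Hfb. pose proof (Hf0 u1 Cu1).
  (* move towards the core point b, by a step too small to lose more than eta / 2 *)
  set (s := Rmin 1 (eta / (2 * (1 + f b)))).
  assert (Hs : 0 < s <= 1).
  { split; [apply Rmin_pos; [lra|apply Rdiv_lt_0_compat; lra]|apply Rmin_l]. }
  assert (Hsf : s * f b <= eta / 2).
  { assert (s <= eta / (2 * (1 + f b))) by apply Rmin_r.
    apply Rle_trans with (eta / (2 * (1 + f b)) * f b); [apply Rmult_le_compat_r; auto|].
    apply Rmult_le_reg_r with (2 * (1 + f b)); [lra|]. field_simplify; nra. }
  exists (fun j => s * b j + (1 - s) * u1 j). split; [apply intrinsic_core_mix; auto|].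
  intros u Cu. pose proof (Hf b u1 s (proj1 Hb) Cu1 ltac:(lra)). pose proof (Hlow u Cu). nra.
Qed.

End ConvexSet.

(** * Approximate subgradient decomposition *)

Lemma common_radius n (P : nat -> R -> Prop) :
  (forall i, (i < n)%nat -> exists r, 0 < r /\ P i r) ->
  (forall i r r', (i < n)%nat -> P i r -> 0 < r' <= r -> P i r') ->
  exists r, 0 < r /\ forall i, (i < n)%nat -> P i r.
Proof.
  induction n as [|n IH]; intros H Hd.
  - exists 1. split; [lra|intros; lia].
  - destruct (IH (fun i Hi => H i ltac:(lia)) (fun i r r' Hi => Hd i r r' ltac:(lia))) as [r1 [Hr1 H1]].
    destruct (H n ltac:(lia)) as [r2 [Hr2 H2]].
    exists (Rmin r1 r2). split; [apply Rmin_pos; auto|].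
    intros i Hi. destruct (Nat.eq_dec i n) as [->|].
    + apply (Hd n r2); auto. split; [apply Rmin_pos; auto|apply Rmin_r].
    + apply (Hd i r1); [lia|apply H1; lia|]. split; [apply Rmin_pos; auto|apply Rmin_l].
Qed.

Lemma exists_uniform_scale n (a b : nat -> R) : (forall i, (i < n)%nat -> 0 <= a i) ->
  (forall i, (i < n)%nat -> 0 < b i) -> exists eps, 0 < eps /\ forall i, (i < n)%nat -> eps * a i <= b i.
Proof.
  intros Ha Hb. apply (common_radius n (fun i r => r * a i <= b i)).
  - intros i Hi. exists (b i / (1 + a i)). pose proof (Ha i Hi). pose proof (Hb i Hi).
    split; [apply Rdiv_lt_0_compat; lra|].
    apply Rmult_le_reg_r with (1 + a i); [lra|]. field_simplify; nra.
  - intros i r r' Hi H1 H2. pose proof (Ha i Hi). nra.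
Qed.

Section SubgradientDecomposition.
Variables (n d : nat) (C : (nat -> R) -> Prop) (psi : (nat -> R) -> nat -> R)
  (p u0 : nat -> R) (eta : R).
Hypothesis n_pos : (1 <= n)%nat.
Hypothesis HC : convex_set d C.
Hypothesis psi_convex : convex_surrogate n C psi.
Hypothesis p_pos : forall i, (i < n)%nat -> 0 < p i.
Hypothesis u0_core : in_intrinsic_core C u0.
Hypothesis u0_opt : forall u, C u -> dot n p (psi u0) <= dot n p (psi u) + eta.

(* The coordinates of x come in blocks of length d: block 0 moves every copy of u0,
   block i+1 only the i-th copy. *)
Definition shifted_point (x : nat -> R) (i : nat) : nat -> R :=
  fun k => u0 k + (if Compare_dec.lt_dec k d then x k + x (S i * d + k)%nat else 0).

Definition shift_domain (x : nat -> R) : Prop := forall i, (i < n)%nat -> C (shifted_point x i).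

Definition shift_excess (x : nat -> R) : R :=
  rsum n (fun i => p i * (psi (shifted_point x i) i - psi u0 i)) + eta.

Lemma shifted_point_comb x y lam i :
  shifted_point (fun c => lam * x c + (1 - lam) * y c) i =
  (fun k => lam * shifted_point x i k + (1 - lam) * shifted_point y i k).
Proof.
  apply functional_extensionality; intros k. unfold shifted_point.
  destruct (Compare_dec.lt_dec k d); ring.
Qed.

Lemma shift_domain_convex x y lam : shift_domain x -> shift_domain y -> 0 <= lam <= 1 ->
  shift_domain (fun c => lam * x c + (1 - lam) * y c).
Proof. intros Dx Dy Hl i Hi. rewrite shifted_point_comb. apply (convex_set_comb d); auto. Qed.

Lemma shift_domain_absorbing x : shift_domain x -> exists r, 0 < r /\ shift_domain (fun c => - r * x c).
Proof.
  intros Dx.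
  destruct (common_radius n (fun i r => C (fun k => u0 k - r * (shifted_point x i k - u0 k))))
    as [r [Hr Hall]].
  - intros i Hi. apply (proj2 u0_core), Dx, Hi.
  - intros i r r' Hi H1 H2. apply (intrinsic_core_shrink d C HC u0 _ r r'); auto.
    + apply u0_core.
    + lra.
    + lra.
  - exists r. split; auto. intros i Hi.
    replace (shifted_point (fun c => - r * x c) i) with
      (fun k => u0 k - r * (shifted_point x i k - u0 k)); [auto|].
    apply functional_extensionality; intros k. unfold shifted_point.
    destruct (Compare_dec.lt_dec k d); ring.
Qed.

Lemma shift_excess_convex x y lam : shift_domain x -> shift_domain y -> 0 <= lam <= 1 ->
  shift_excess (fun c => lam * x c + (1 - lam) * y c) <= lam * shift_excess x + (1 - lam) * shift_excess y.
Proof.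
  intros Dx Dy Hl. unfold shift_excess.
  enough (rsum n (fun i => p i * (psi (shifted_point (fun c => lam * x c + (1 - lam) * y c) i) i - psi u0 i))
    <= rsum n (fun i => lam * (p i * (psi (shifted_point x i) i - psi u0 i)) +
                        (1 - lam) * (p i * (psi (shifted_point y i) i - psi u0 i)))) as H
    by (rewrite rsum_plus, !rsum_scal_l in H; lra).
  apply rsum_le. intros i Hi. rewrite shifted_point_comb.
  pose proof (psi_convex i _ _ lam Hi (Dx i Hi) (Dy i Hi) Hl). pose proof (p_pos i Hi). nra.
Qed.

Lemma shift_excess_base x : shift_domain x -> supported_below d x -> 0 <= shift_excess x.
Proof.
  intros Dx Sx.
  assert (E : forall i, shifted_point x i = shifted_point x 0).
  { intros i. apply functional_extensionality; intros k. unfold shifted_point.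
    destruct (Compare_dec.lt_dec k d); [|reflexivity].
    rewrite (Sx (S i * d + k)%nat), (Sx (1 * d + k)%nat) by nia. reflexivity. }
  unfold shift_excess. rewrite (rsum_ext n _ (fun i => p i * psi (shifted_point x 0) i - p i * psi u0 i))
    by (intros i Hi; rewrite E; ring).
  rewrite rsum_minus. pose proof (u0_opt _ (Dx 0%nat ltac:(lia))). unfold dot in *. lra.
Qed.

Definition unit_at (j c : nat) : R := if Nat.eq_dec c j then 1 else 0.

Definition balanced_vector (k0 : nat) (t : R) (c : nat) : R :=
  t * (unit_at k0 c - rsum n (fun i => unit_at (S i * d + k0) c)).

Lemma shifted_point_balanced k0 t i : (k0 < d)%nat -> (i < n)%nat ->
  shifted_point (balanced_vector k0 t) i = u0.
Proof.
  intros Hk0 Hi. apply functional_extensionality; intros k. unfold shifted_point.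
  destruct (Compare_dec.lt_dec k d) as [Hk|]; [|ring].
  unfold balanced_vector. rewrite (rsum_eq0 n (fun i' => unit_at (S i' * d + k0) k))
    by (intros i' Hi'; unfold unit_at; destruct (Nat.eq_dec k _); [nia|reflexivity]).
  rewrite (rsum_ext n _ (fun i' => if Nat.eq_dec i' i then unit_at k0 k else 0)).
  - rewrite rsum_delta by auto.
    replace (unit_at k0 (S i * d + k)) with 0
      by (unfold unit_at; destruct (Nat.eq_dec _ k0); [nia|reflexivity]).
    ring.
  - intros i' Hi'. unfold unit_at. destruct (Nat.eq_dec (S i * d + k) (S i' * d + k0)) as [E|E].
    + destruct (block_index_inj d (S i) (S i') k k0 Hk Hk0 E) as [Ei ->].
      destruct (Nat.eq_dec i' i); [|lia]. destruct (Nat.eq_dec k0 k0); [reflexivity|lia].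
    + destruct (Nat.eq_dec i' i) as [->|]; [|reflexivity].
      destruct (Nat.eq_dec k k0) as [->|]; [lia|reflexivity].
Qed.

Lemma balanced_vector_supported k0 t : (k0 < d)%nat ->
  supported_below (S n * d) (balanced_vector k0 t).
Proof.
  intros Hk0 c Hc. unfold balanced_vector, unit_at. destruct (Nat.eq_dec c k0); [nia|].
  rewrite rsum_eq0; [ring|]. intros i Hi. destruct (Nat.eq_dec c _); [nia|reflexivity].
Qed.

Lemma dot_balanced_vector g k0 t : (k0 < d)%nat ->
  dot (S n * d) g (balanced_vector k0 t) = t * (g k0 - rsum n (fun a => g (S a * d + k0)%nat)).
Proof.
  intros Hk0. unfold dot, balanced_vector.
  rewrite (rsum_ext _ _ (fun c => t * (g c * unit_at k0 c) -
             t * rsum n (fun i => g c * unit_at (S i * d + k0) c)))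
    by (intros c _; rewrite (rsum_scal_l n (g c) (fun i => unit_at (S i * d + k0) c)); ring).
  rewrite rsum_minus, !rsum_scal_l, rsum_swap. unfold unit_at. rewrite rsum_mul_delta by nia.
  rewrite (rsum_ext n _ (fun a => g (S a * d + k0)%nat)) by (intros; apply rsum_mul_delta; nia).
  ring.
Qed.

Section Minorant.
Variable g : nat -> R.
Hypothesis g_minorant : forall x, shift_domain x -> supported_below (S n * d) x ->
  dot (S n * d) g x <= shift_excess x.

Lemma minorant_balanced : (forall c, (c < d)%nat -> g c = 0) ->
  forall k0, (k0 < d)%nat -> rsum n (fun a => g (S a * d + k0)%nat) = 0.
Proof.
  intros Hg0 k0 Hk0.
  set (total := rsum n (fun a => g (S a * d + k0)%nat)).
  destruct (Req_dec total 0) as [|Htot]; auto. exfalso.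
  (* g is linear along the line of balanced vectors, where shift_excess is the constant eta *)
  set (t := - (eta + 1) / total).
  pose proof (g_minorant (balanced_vector k0 t)) as H.
  rewrite dot_balanced_vector, Hg0 in H by auto. fold total in H. unfold shift_excess in H.
  rewrite rsum_eq0 in H by (intros i Hi; rewrite shifted_point_balanced by auto; ring).
  enough (shift_domain (balanced_vector k0 t)) as Dx.
  - specialize (H Dx (balanced_vector_supported k0 t Hk0)).
    replace (t * (0 - total)) with (eta + 1) in H by (unfold t; field; auto). lra.
  - intros i Hi. rewrite shifted_point_balanced by auto. apply u0_core.
Qed.

Definition block_vector (b : nat) (h : nat -> R) : nat -> R :=
  fun c => if andb (Nat.leb (b * d) c) (Nat.ltb c (b * d + d)) then h (c - b * d)%nat else 0.

Lemma block_vector_at b b' h k : (k < d)%nat ->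
  block_vector b h (b' * d + k)%nat = if Nat.eq_dec b' b then h k else 0.
Proof.
  intros Hk. unfold block_vector.
  destruct (Nat.leb_spec (b * d) (b' * d + k)), (Nat.ltb_spec (b' * d + k) (b * d + d)); simpl;
    destruct (Nat.eq_dec b' b) as [->|Hne]; try (f_equal; lia); nia.
Qed.

Lemma minorant_block_subgradient a u : (a < n)%nat -> C u ->
  rsum d (fun k => g (S a * d + k)%nat * (u k - u0 k)) <= p a * (psi u a - psi u0 a) + eta.
Proof.
  intros Ha Cu.
  set (x := block_vector (S a) (fun k => u k - u0 k)).
  assert (Hsp : forall i, shifted_point x i = if Nat.eq_dec i a then u else u0).
  { intros i. apply functional_extensionality; intros k. unfold shifted_point.
    destruct (Compare_dec.lt_dec k d) as [Hk|Hk].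
    - unfold x. rewrite block_vector_at by auto.
      replace (block_vector (S a) _ k) with 0
        by (unfold block_vector; destruct (Nat.leb_spec (S a * d) k); [nia|reflexivity]).
      destruct (Nat.eq_dec (S i) (S a)), (Nat.eq_dec i a); try lia; ring.
    - destruct (Nat.eq_dec i a); [|ring].
      rewrite (proj1 HC u0 (proj1 u0_core) k), (proj1 HC u Cu k) by lia. ring. }
  assert (Dx : shift_domain x).
  { intros i Hi. rewrite Hsp. destruct (Nat.eq_dec i a); auto. apply u0_core. }
  assert (Sx : supported_below (S n * d) x).
  { intros c Hc. unfold x, block_vector.
    destruct (Nat.ltb_spec c (S a * d + d)); [nia|]. rewrite Bool.andb_false_r. reflexivity. }
  pose proof (g_minorant x Dx Sx) as H.
  unfold dot in H. rewrite rsum_blocks in H.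
  rewrite (rsum_ext (S n) _ (fun b => if Nat.eq_dec b (S a)
             then rsum d (fun k => g (S a * d + k)%nat * (u k - u0 k)) else 0)) in H.
  2:{ intros b Hb. destruct (Nat.eq_dec b (S a)) as [->|Hne].
      - apply rsum_ext. intros k Hk. unfold x. rewrite block_vector_at by auto.
        destruct (Nat.eq_dec (S a) (S a)); [reflexivity|lia].
      - apply rsum_eq0. intros k Hk. unfold x. rewrite block_vector_at by auto.
        destruct (Nat.eq_dec b (S a)); [lia|ring]. }
  rewrite rsum_delta in H by lia. unfold shift_excess in H.
  rewrite (rsum_ext n _ (fun i => if Nat.eq_dec i a then p a * (psi u a - psi u0 a) else 0)) in H.
  - rewrite rsum_delta in H by auto. exact H.
  - intros i Hi. rewrite Hsp. destruct (Nat.eq_dec i a) as [->|]; [reflexivity|ring].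
Qed.

End Minorant.

Lemma approx_subgradient_decomposition :
  exists gam : nat -> nat -> R,
    (forall k, (k < d)%nat -> rsum n (fun a => gam a k) = 0) /\
    forall a u, (a < n)%nat -> C u ->
      rsum d (fun k => gam a k * (u k - u0 k)) <= p a * (psi u a - psi u0 a) + eta.
Proof.
  destruct (minorant_extend shift_domain shift_excess shift_domain_convex shift_domain_absorbing
              shift_excess_convex d shift_excess_base (S n * d)) as [g [Hg0 Hg]]; [nia|].
  exists (fun a k => g (S a * d + k)%nat). split.
  - apply minorant_balanced; auto.
  - intros a u. apply minorant_block_subgradient; auto.
Qed.

End SubgradientDecomposition.

Lemma dot_comb_l N p v w tau : dot N (fun i => p i + tau * v i) w = dot N p w + tau * dot N v w.
Proof. unfold dot. rewrite <- rsum_scal_l, <- rsum_plus. apply rsum_ext; intros; ring. Qed.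

Lemma rsum_eq1_len_pos n f : rsum n f = 1 -> (1 <= n)%nat.
Proof. destruct n; [simpl; lra|lia]. Qed.

Lemma lsum_nth (l : list nat) f : lsum l f = rsum (length l) (fun j => f (nth j l 0%nat)).
Proof.
  induction l as [|a l IH]; [reflexivity|].
  change (lsum (a :: l) f) with (f a + lsum l f). rewrite IH.
  change (length (a :: l)) with (S (length l)). rewrite rsum_shift. reflexivity.
Qed.

Section Directions.
Variables (n k m : nat) (L : nat -> nat -> R) (p : nat -> R) (c : R) (s : list nat).
Hypothesis p_sum : rsum n p = 1.
Hypothesis p_level : forall t, (t < k)%nat -> dot n p (col L t) = c.
Hypothesis s_indep : aff_indep_cols n k L s.
Hypothesis s_length : length s = S m.

Definition base_col := nth 0 s 0%nat.
Definition other_col j := nth (S j) s 0%nat.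
Definition col_diff j i := L i (other_col j) - L i base_col.
Definition centered_diff j i := col_diff j i - rsum n (col_diff j) / INR n.

(* Centering keeps the weights p + tau * direction lam summing to 1. *)
Definition direction (lam : nat -> R) i := rsum m (fun j => lam j * centered_diff j i).

Lemma direction_sum lam : rsum n (direction lam) = 0.
Proof.
  unfold direction. rewrite <- rsum_swap. apply rsum_eq0. intros j Hj.
  rewrite rsum_scal_l. unfold centered_diff. rewrite rsum_minus, rsum_const.
  field_simplify; [ring|]. apply not_0_INR. pose proof (rsum_eq1_len_pos n p p_sum). lia.
Qed.

Lemma base_col_in : In base_col s.
Proof. unfold base_col. apply nth_In. lia. Qed.

Lemma other_col_in j : (j < m)%nat -> In (other_col j) s.
Proof. intros. unfold other_col. apply nth_In. lia. Qed.

Lemma other_col_neq_base j : (j < m)%nat -> other_col j <> base_col.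
Proof. intros Hj E. apply (NoDup_nth s 0%nat) in E; [lia|apply s_indep|lia|lia]. Qed.

Lemma other_col_inj j j' : (j < m)%nat -> (j' < m)%nat -> other_col j = other_col j' -> j = j'.
Proof. intros Hj Hj' E. apply (NoDup_nth s 0%nat) in E; [lia|apply s_indep|lia|lia]. Qed.

Lemma lsum_cols f : lsum s f = f base_col + rsum m (fun j => f (other_col j)).
Proof. rewrite lsum_nth, s_length, rsum_shift. reflexivity. Qed.

Lemma dot_col_diff v j : (j < m)%nat ->
  rsum n (fun i => v i * col_diff j i) = dot n v (col L (other_col j)) - dot n v (col L base_col).
Proof. intros. unfold dot, col_diff, col. rewrite <- rsum_minus. apply rsum_ext; intros; ring. Qed.

Lemma direction_level_eq0 lam t0 : (t0 < k)%nat ->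
  (forall t, (t < k)%nat -> dot n (direction lam) (col L t) = dot n (direction lam) (col L t0)) ->
  forall i, (i < n)%nat -> direction lam i = 0.
Proof.
  intros Ht0 Hlev.
  assert (Hcen : forall j, (j < m)%nat -> rsum n (fun i => direction lam i * centered_diff j i) = 0).
  { intros j Hj. unfold centered_diff at 1.
    rewrite (rsum_ext n _ (fun i => direction lam i * col_diff j i -
                                    direction lam i * (rsum n (col_diff j) / INR n)))
      by (intros; ring).
    rewrite rsum_minus, rsum_scal_r, dot_col_diff, direction_sum by auto.
    destruct s_indep as [_ [Hsk _]].
    rewrite Hlev, (Hlev base_col) by (apply Hsk; auto using base_col_in, other_col_in). ring. }
  apply rsum_sq_eq0.
  rewrite (rsum_ext n _ (fun i => rsum m (fun j => lam j * (direction lam i * centered_diff j i)))).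
  - rewrite rsum_swap. apply rsum_eq0. intros j Hj. rewrite rsum_scal_l, Hcen; auto. ring.
  - intros i Hi. unfold direction at 2. rewrite <- rsum_scal_l. apply rsum_ext; intros; ring.
Qed.

Lemma col_diffs_indep lam : (forall i, (i < n)%nat -> rsum m (fun j => lam j * col_diff j i) = 0) ->
  forall j, (j < m)%nat -> lam j = 0.
Proof.
  intros Hdiff. destruct s_indep as [_ [_ Haff]].
  (* the coefficients of the affine dependence: - sum lam on the base column, lam j on column j *)
  set (coef := fun t => (if Nat.eq_dec t base_col then - rsum m lam else 0) +
                        rsum m (fun j => if Nat.eq_dec t (other_col j) then lam j else 0)).
  assert (Hbase : coef base_col = - rsum m lam).
  { unfold coef. destruct (Nat.eq_dec base_col base_col); [|tauto].
    rewrite (rsum_eq0 m (fun j => if Nat.eq_dec base_col (other_col j) then lam j else 0)); [ring|].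
    intros j Hj. destruct (Nat.eq_dec base_col (other_col j)) as [E|]; [|auto].
    symmetry in E. apply other_col_neq_base in E; tauto. }
  assert (Hother : forall j, (j < m)%nat -> coef (other_col j) = lam j).
  { intros j Hj. unfold coef. destruct (Nat.eq_dec (other_col j) base_col) as [E|].
    { apply other_col_neq_base in E; tauto. }
    rewrite (rsum_ext m _ (fun j' => if Nat.eq_dec j' j then lam j' else 0)).
    - rewrite rsum_delta by auto. ring.
    - intros j' Hj'. destruct (Nat.eq_dec (other_col j) (other_col j')) as [E|E];
        destruct (Nat.eq_dec j' j); subst; auto; [|tauto].
      apply other_col_inj in E; auto. lia. }
  intros j Hj. rewrite <- (Hother j Hj). apply Haff; [| |auto using other_col_in].
  - rewrite lsum_cols, Hbase, (rsum_ext m (fun j => coef (other_col j)) lam) by auto. ring.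
  - intros i Hi. rewrite lsum_cols. cbv beta. rewrite Hbase.
    rewrite (rsum_ext m (fun j => coef (other_col j) * L i (other_col j))
               (fun j => lam j * L i (other_col j))) by (intros; rewrite Hother; auto).
    pose proof (Hdiff i Hi) as H. unfold col_diff in H.
    rewrite (rsum_ext m _ (fun j => lam j * L i (other_col j) - lam j * L i base_col)) in H by (intros; ring).
    rewrite rsum_minus, rsum_scal_r in H. lra.
Qed.

Lemma direction_eq0_coeffs lam : (forall i, (i < n)%nat -> direction lam i = 0) ->
  forall j, (j < m)%nat -> lam j = 0.
Proof.
  intros Hv. apply col_diffs_indep.
  set (mu := rsum m (fun j => lam j * (rsum n (col_diff j) / INR n))).
  assert (Hconst : forall i, (i < n)%nat -> rsum m (fun j => lam j * col_diff j i) = mu).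
  { intros i Hi. pose proof (Hv i Hi) as H. unfold direction, centered_diff in H.
    rewrite (rsum_ext m _ (fun j => lam j * col_diff j i - lam j * (rsum n (col_diff j) / INR n))) in H
      by (intros; ring).
    rewrite rsum_minus in H. unfold mu. lra. }
  destruct s_indep as [_ [Hsk _]].
  (* averaging the constant mu against p gives 0, since p is level on the columns *)
  enough (Hmu : mu = 0) by (intros; rewrite Hconst; auto).
  transitivity (rsum n (fun i => p i * rsum m (fun j => lam j * col_diff j i))).
  - rewrite (rsum_ext n _ (fun i => p i * mu)) by (intros; rewrite Hconst; auto).
    rewrite rsum_scal_r, p_sum. ring.
  - rewrite (rsum_ext n _ (fun i => rsum m (fun j => lam j * (p i * col_diff j i))))
      by (intros; rewrite <- rsum_scal_l; apply rsum_ext; intros; ring).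
    rewrite rsum_swap. apply rsum_eq0. intros j Hj. rewrite rsum_scal_l, dot_col_diff by auto.
    rewrite !p_level by (apply Hsk; auto using base_col_in, other_col_in). ring.
Qed.

Lemma direction_level_coeffs lam t0 : (t0 < k)%nat ->
  (forall t, (t < k)%nat -> dot n (direction lam) (col L t) = dot n (direction lam) (col L t0)) ->
  forall j, (j < m)%nat -> lam j = 0.
Proof. intros Ht0 Hlev. apply direction_eq0_coeffs, (direction_level_eq0 lam t0); auto. Qed.

Definition spread i := rsum m (fun j => Rabs (centered_diff j i)).

Lemma spread_ge0 i : 0 <= spread i.
Proof. apply rsum_ge0. intros; apply Rabs_pos. Qed.

Lemma direction_lipschitz lam lam' rho i : (forall j, (j < m)%nat -> Rabs (lam j - lam' j) <= rho) ->
  Rabs (direction lam i - direction lam' i) <= rho * spread i.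
Proof.
  intros H. unfold direction, spread. rewrite <- rsum_minus, <- rsum_scal_l.
  eapply Rle_trans; [apply Rabs_rsum_le|]. apply rsum_le. intros j Hj.
  replace (lam j * centered_diff j i - lam' j * centered_diff j i)
    with ((lam j - lam' j) * centered_diff j i) by ring.
  rewrite Rabs_mult. apply Rmult_le_compat_r; [apply Rabs_pos|auto].
Qed.

Lemma direction_bound lam i : unit_box m lam ->
  Rabs (direction lam i) <= spread i.
Proof.
  intros H. rewrite <- (Rmult_1_l (spread i)).
  replace (direction lam i) with (direction lam i - direction (fun _ => 0) i).
  - apply direction_lipschitz. intros j Hj. rewrite Rminus_0_r. apply Rabs_le, H, Hj.
  - unfold direction. rewrite (rsum_eq0 m (fun j => 0 * centered_diff j i)) by (intros; ring). ring.
Qed.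

End Directions.

Lemma Rabs_le_between x a : Rabs x <= a -> - a <= x <= a.
Proof. unfold Rabs. destruct (Rcase_abs x); lra. Qed.

(** * Approximately optimal directions *)

Lemma unit_box_normalize m (lam : nat -> R) : (exists j, (j < m)%nat /\ lam j <> 0) ->
  exists r, 0 < r /\ unit_box m (fun j => r * lam j) /\ exists j, (j < m)%nat /\ Rabs (r * lam j) = 1.
Proof.
  intros [j1 [Hj1 Hnz]].
  assert (Hmax : exists j0, (j0 < m)%nat /\ forall j, (j < m)%nat -> Rabs (lam j) <= Rabs (lam j0)).
  { clear Hnz. revert j1 Hj1. induction m as [|m IH]; intros j1 Hj1; [lia|].
    destruct (Nat.eq_dec m 0) as [->|Hm].
    - exists O. split; [lia|]. intros j Hj. replace j with O by lia. lra.
    - destruct (IH O ltac:(lia)) as [j0 [Hj0 Hj0max]].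
      destruct (Rle_lt_dec (Rabs (lam m)) (Rabs (lam j0))).
      + exists j0. split; [lia|]. intros j Hj. destruct (Nat.eq_dec j m) as [->|]; auto. apply Hj0max; lia.
      + exists m. split; [lia|]. intros j Hj. destruct (Nat.eq_dec j m) as [->|]; [lra|].
        pose proof (Hj0max j ltac:(lia)). lra. }
  destruct Hmax as [j0 [Hj0 Hj0max]].
  assert (Hpos : 0 < Rabs (lam j0)) by (pose proof (Hj0max j1 Hj1); pose proof (Rabs_pos_lt _ Hnz); lra).
  exists (/ Rabs (lam j0)). split; [apply Rinv_0_lt_compat; auto|split].
  - intros j Hj. apply Rabs_le_between. rewrite Rabs_mult, Rabs_inv, Rabs_Rabsolu.
    apply Rmult_le_reg_l with (Rabs (lam j0)); auto.
    rewrite <- Rmult_assoc, Rinv_r by lra. pose proof (Hj0max j Hj). lra.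
  - exists j0. split; auto. rewrite Rabs_mult, Rabs_inv, Rabs_Rabsolu. field. lra.
Qed.

Lemma weighted_subgradient_sum n d (C : (nat -> R) -> Prop) (psi : (nat -> R) -> nat -> R)
  (p q u0 : nat -> R) (gam : nat -> nat -> R) eta :
  (forall a, (a < n)%nat -> 0 < p a) -> (forall a, (a < n)%nat -> 0 <= q a) ->
  (forall a u, (a < n)%nat -> C u ->
     rsum d (fun k => gam a k * (u k - u0 k)) <= p a * (psi u a - psi u0 a) + eta) ->
  (forall k, (k < d)%nat -> rsum n (fun a => q a / p a * gam a k) = 0) ->
  forall u, C u -> dot n q (psi u0) <= dot n q (psi u) + eta * rsum n (fun a => q a / p a).
Proof.
  intros Hp Hq Hgam Hbal u Cu.
  assert (Hsum : rsum n (fun a => q a / p a * rsum d (fun k => gam a k * (u k - u0 k))) <=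
                 rsum n (fun a => q a / p a * (p a * (psi u a - psi u0 a) + eta))).
  { apply rsum_le. intros a Ha. apply Rmult_le_compat_l; [|apply Hgam; auto].
    unfold Rdiv. apply Rmult_le_pos; [auto|left; apply Rinv_0_lt_compat; auto]. }
  assert (Hzero : rsum n (fun a => q a / p a * rsum d (fun k => gam a k * (u k - u0 k))) = 0).
  { rewrite (rsum_ext n _ (fun a => rsum d (fun k => (u k - u0 k) * (q a / p a * gam a k))))
      by (intros; rewrite <- rsum_scal_l; apply rsum_ext; intros; ring).
    rewrite rsum_swap. apply rsum_eq0. intros k Hk. rewrite rsum_scal_l, Hbal; auto. ring. }
  rewrite (rsum_ext n (fun a => q a / p a * (p a * (psi u a - psi u0 a) + eta))
             (fun a => (q a * psi u a - q a * psi u0 a) + eta * (q a / p a))) in Hsum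
    by (intros a Ha; field; pose proof (Hp a Ha); lra).
  rewrite Hzero, rsum_plus, rsum_minus, rsum_scal_l in Hsum. unfold dot. lra.
Qed.

Lemma dot_transfer n q q' a b : (forall i, (i < n)%nat -> 0 <= a i) -> (forall i, (i < n)%nat -> 0 <= b i) ->
  dot n q a - dot n q b <= dot n q' a - dot n q' b + rsum n (fun i => Rabs (q i - q' i) * (a i + b i)).
Proof.
  intros Ha Hb.
  assert (E : dot n q a - dot n q b - (dot n q' a - dot n q' b) =
              rsum n (fun i => (q i - q' i) * (a i - b i))).
  { unfold dot. rewrite <- !rsum_minus. apply rsum_ext. intros; ring. }
  enough (rsum n (fun i => (q i - q' i) * (a i - b i)) <= rsum n (fun i => Rabs (q i - q' i) * (a i + b i)))
    by lra.
  apply rsum_le. intros i Hi. pose proof (Ha i Hi). pose proof (Hb i Hi).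
  apply Rle_trans with (Rabs (q i - q' i) * Rabs (a i - b i)).
  - rewrite <- Rabs_mult. apply Rle_abs.
  - apply Rmult_le_compat_l; [apply Rabs_pos|]. apply Rabs_le. lra.
Qed.

Lemma argmin_both_flat n k L (p w : nat -> R) c eps t0 : 0 < eps ->
  (forall t, (t < k)%nat -> dot n p (col L t) = c) ->
  in_argmin n k L (fun i => p i + eps * w i) t0 -> in_argmin n k L (fun i => p i + - eps * w i) t0 ->
  forall t, (t < k)%nat -> dot n w (col L t) = dot n w (col L t0).
Proof.
  intros Heps Hlev [Ht0 Hplus] [_ Hminus] t Ht.
  specialize (Hplus t Ht). specialize (Hminus t Ht).
  rewrite !dot_comb_l, !Hlev in Hplus, Hminus by auto.
  apply Rle_antisym; apply Rmult_le_reg_l with eps; auto; lra.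
Qed.

Lemma exists_small_errors a b gap : 0 <= a -> 0 <= b -> 0 < gap ->
  exists eta rho, 0 < eta <= 1 /\ 0 < rho /\ a * eta + b * rho <= gap / 2.
Proof.
  intros Ha Hb Hgap. exists (Rmin 1 (gap / (4 * (a + 1)))), (gap / (4 * (b + 1))).
  assert (Heta : Rmin 1 (gap / (4 * (a + 1))) <= gap / (4 * (a + 1))) by apply Rmin_r.
  split; [split; [apply Rmin_pos; [lra|apply Rdiv_lt_0_compat; lra]|apply Rmin_l]|].
  split; [apply Rdiv_lt_0_compat; lra|].
  assert (a * (gap / (4 * (a + 1))) <= gap / 4).
  { apply Rmult_le_reg_r with (4 * (a + 1)); [lra|]. field_simplify; nra. }
  assert (b * (gap / (4 * (b + 1))) <= gap / 4).
  { apply Rmult_le_reg_r with (4 * (b + 1)); [lra|]. field_simplify; nra. }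
  assert (a * Rmin 1 (gap / (4 * (a + 1))) <= a * (gap / (4 * (a + 1)))) by (apply Rmult_le_compat_l; auto).
  lra.
Qed.

Section LowDimensionalSurrogate.
Variables (n k d m : nat) (L : nat -> nat -> R) (p : nat -> R) (c : R) (s : list nat)
  (C : (nat -> R) -> Prop) (psi : (nat -> R) -> nat -> R) (pred : (nat -> R) -> nat).
Hypothesis p_pos : forall i, (i < n)%nat -> 0 < p i.
Hypothesis p_sum : rsum n p = 1.
Hypothesis p_level : forall t, (t < k)%nat -> dot n p (col L t) = c.
Hypothesis s_indep : aff_indep_cols n k L s.
Hypothesis s_length : length s = S m.
Hypothesis HC : convex_set d C.
Hypothesis psi_nonneg : nonneg_surrogate n C psi.
Hypothesis psi_convex : convex_surrogate n C psi.
Hypothesis psi_calibrated : forall q, in_simplex n q ->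
  inf_gt C (fun u => ~ in_argmin n k L q (pred u)) (fun u => dot n q (psi u)).
Hypothesis d_lt_m : (d < m)%nat.

Local Notation dir := (direction n m L s).
Local Notation spread := (spread n m L s).

Definition robust_near_optimal (eta : R) (u0 lam : nat -> R) : Prop :=
  C u0 /\ forall tau u, (forall i, (i < n)%nat -> 0 <= p i + tau * dir lam i) -> C u ->
    dot n (fun i => p i + tau * dir lam i) (psi u0) <=
    dot n (fun i => p i + tau * dir lam i) (psi u) + eta * rsum n (fun i => (p i + tau * dir lam i) / p i).

Lemma robust_near_optimal_exists eta : 0 < eta ->
  exists u0 lam, unit_box m lam /\ (exists j, (j < m)%nat /\ Rabs (lam j) = 1) /\
    robust_near_optimal eta u0 lam.
Proof.
  intros Heta.
  assert (Hne : exists u, C u).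
  { destruct (psi_calibrated p) as [r [_ [u [Cu _]]]]; [split; auto; intros; left; auto|eauto]. }
  destruct (near_optimal_intrinsic_core_point d C HC (fun u => dot n p (psi u)) eta) as [u0 [Hcore Hopt]];
    auto.
  { intros u v lam Cu Cv Hl. unfold dot. rewrite <- !rsum_scal_l, <- rsum_plus. apply rsum_le.
    intros i Hi. pose proof (psi_convex i u v lam Hi Cu Cv Hl). pose proof (p_pos i Hi). nra. }
  { intros u Cu. apply rsum_ge0. intros i Hi.
    pose proof (p_pos i Hi). pose proof (psi_nonneg u Cu i Hi). nra. }
  destruct (approx_subgradient_decomposition n d C psi p u0 eta (rsum_eq1_len_pos n p p_sum)
              HC psi_convex p_pos Hcore Hopt) as [gam [Hbal Hgam]].
  (* d equations in m > d unknowns: make the direction invisible to every gam . k / p *)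
  destruct (homogeneous_system_nontrivial m d
              (fun k j => rsum n (fun a => gam a k / p a * centered_diff n L s j a)) d_lt_m)
    as [lam0 [Hnz Hker]].
  destruct (unit_box_normalize m lam0 Hnz) as [r [Hr [Hbox Hmax]]].
  exists u0, (fun j => r * lam0 j). split; [auto|split; [auto|split; [apply Hcore|]]].
  intros tau u Hq Cu. apply (weighted_subgradient_sum n d C psi p _ u0 gam eta); auto.
  intros k' Hk'.
  rewrite (rsum_ext n _ (fun a => gam a k' +
             tau * r * rsum m (fun j => lam0 j * (gam a k' / p a * centered_diff n L s j a)))).
  - rewrite rsum_plus, Hbal, rsum_scal_l, rsum_swap by auto.
    rewrite (rsum_ext m _ (fun j => rsum n (fun a => gam a k' / p a * centered_diff n L s j a) * lam0 j))
      by (intros; rewrite rsum_scal_l; ring).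
    specialize (Hker k' Hk'). unfold dot in Hker. rewrite Hker. ring.
  - intros a Ha. unfold direction.
    rewrite (rsum_ext m (fun j => r * lam0 j * centered_diff n L s j a)
               (fun j => r * (lam0 j * centered_diff n L s j a))) by (intros; ring).
    rewrite (rsum_ext m (fun j => lam0 j * (gam a k' / p a * centered_diff n L s j a))
               (fun j => gam a k' / p a * (lam0 j * centered_diff n L s j a))) by (intros; ring).
    rewrite !rsum_scal_l. field. pose proof (p_pos a Ha). lra.
Qed.

Lemma robust_near_optimal_mono eta eta' u0 lam : eta <= eta' ->
  robust_near_optimal eta u0 lam -> robust_near_optimal eta' u0 lam.
Proof.
  intros Hle [Cu0 H]. split; auto. intros tau u Hq Cu. specialize (H tau u Hq Cu).
  assert (0 <= rsum n (fun i => (p i + tau * dir lam i) / p i)).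
  { apply rsum_ge0. intros i Hi. unfold Rdiv. apply Rmult_le_pos; auto.
    left; apply Rinv_0_lt_compat; auto. }
  nra.
Qed.

Section Perturbation.
Variable eps : R.
Hypothesis eps_small : forall i, (i < n)%nat -> eps * spread i <= p i / 2.

Lemma perturbed_weights_between lam tau i : unit_box m lam -> Rabs tau <= eps -> (i < n)%nat ->
  p i / 2 <= p i + tau * dir lam i <= 3 * p i / 2.
Proof.
  intros Hbox Htau Hi.
  assert (Rabs (tau * dir lam i) <= eps * spread i).
  { rewrite Rabs_mult. apply Rmult_le_compat; auto using Rabs_pos, direction_bound. }
  pose proof (eps_small i Hi). apply Rabs_le_between in H. lra.
Qed.

Lemma perturbed_weights_simplex lam tau : unit_box m lam -> Rabs tau <= eps ->
  in_simplex n (fun i => p i + tau * dir lam i).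
Proof.
  intros Hbox Htau. split.
  - intros i Hi. pose proof (perturbed_weights_between lam tau i Hbox Htau Hi). pose proof (p_pos i Hi). lra.
  - rewrite rsum_plus, rsum_scal_l, (direction_sum n m L p s p_sum s_length). lra.
Qed.

Definition transfer_error (u : nat -> R) : R :=
  rsum n (fun i => spread i * ((dot n p (psi u) + INR n) / p i + psi u i)).

Lemma transfer_error_ge0 u : C u -> 0 <= transfer_error u.
Proof.
  intros Cu. apply rsum_ge0. intros i Hi. apply Rmult_le_pos; [apply spread_ge0|].
  pose proof (p_pos i Hi). pose proof (psi_nonneg u Cu i Hi).
  assert (0 <= dot n p (psi u)).
  { apply rsum_ge0. intros j Hj. pose proof (p_pos j Hj). pose proof (psi_nonneg u Cu j Hj). nra. }
  assert (0 <= (dot n p (psi u) + INR n) / p i); [|lra].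
  unfold Rdiv. apply Rmult_le_pos; [pose proof (pos_INR n); lra|left; apply Rinv_0_lt_compat; auto].
Qed.

Lemma robust_near_optimal_transfer eta rho u0 lam lam' tau u : 0 < eta <= 1 ->
  robust_near_optimal eta u0 lam -> unit_box m lam ->
  (forall j, (j < m)%nat -> Rabs (lam j - lam' j) <= rho) -> Rabs tau <= eps -> C u ->
  dot n (fun i => p i + tau * dir lam' i) (psi u0) <=
  dot n (fun i => p i + tau * dir lam' i) (psi u) + 2 * INR n * eta + eps * rho * transfer_error u.
Proof.
  intros Heta [Cu0 Hrob] Hbox Hclose Htau Cu.
  pose proof (fun i Hi => perturbed_weights_between lam tau i Hbox Htau Hi) as Hw.
  assert (Hq : dot n (fun i => p i + tau * dir lam i) (psi u0) <=
               dot n (fun i => p i + tau * dir lam i) (psi u) + 2 * INR n * eta).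
  { enough (rsum n (fun i => (p i + tau * dir lam i) / p i) <= 2 * INR n)
      by (pose proof (Hrob tau u (fun i Hi => ltac:(pose proof (Hw i Hi); pose proof (p_pos i Hi); lra)) Cu);
          nra).
    rewrite <- (Rmult_comm (INR n)), <- rsum_const. apply rsum_le. intros i Hi.
    pose proof (Hw i Hi). pose proof (p_pos i Hi).
    apply Rmult_le_reg_r with (p i); auto. field_simplify; lra. }
  assert (Hu0 : forall i, (i < n)%nat -> psi u0 i <= (dot n p (psi u) + INR n) / p i).
  { intros i Hi. pose proof (p_pos i Hi).
    pose proof (Hrob 0 u (fun j Hj => ltac:(pose proof (p_pos j Hj); lra)) Cu) as H0.
    rewrite !dot_comb_l in H0.
    rewrite (rsum_ext n _ (fun _ => 1)), rsum_const in H0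
      by (intros j Hj; field; pose proof (p_pos j Hj); lra).
    assert (p i * psi u0 i <= dot n p (psi u0)).
    { apply (rsum_term_le n (fun j => p j * psi u0 j)); auto.
      intros j Hj. pose proof (p_pos j Hj). pose proof (psi_nonneg u0 Cu0 j Hj). nra. }
    apply Rmult_le_reg_l with (p i); auto.
    replace (p i * ((dot n p (psi u) + INR n) / p i)) with (dot n p (psi u) + INR n) by (field; lra).
    assert (eta * (INR n * 1) <= INR n) by (pose proof (pos_INR n); nra). lra. }
  pose proof (dot_transfer n (fun i => p i + tau * dir lam' i) (fun i => p i + tau * dir lam i)
                (psi u0) (psi u) (psi_nonneg u0 Cu0) (psi_nonneg u Cu)) as Htr.
  enough (rsum n (fun i => Rabs (p i + tau * dir lam' i - (p i + tau * dir lam i)) * (psi u0 i + psi u i))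
          <= eps * rho * transfer_error u) by lra.
  unfold transfer_error. rewrite <- rsum_scal_l. apply rsum_le. intros i Hi.
  replace (p i + tau * dir lam' i - (p i + tau * dir lam i)) with (tau * (dir lam' i - dir lam i)) by ring.
  rewrite Rabs_mult, Rabs_minus_sym.
  pose proof (direction_lipschitz n m L s lam lam' rho i Hclose).
  pose proof (Hu0 i Hi). pose proof (psi_nonneg u0 Cu0 i Hi). pose proof (psi_nonneg u Cu i Hi).
  apply Rle_trans with ((eps * (rho * spread i)) * ((dot n p (psi u) + INR n) / p i + psi u i));
    [|right; ring].
  apply Rmult_le_compat; [apply Rmult_le_pos; apply Rabs_pos|lra| |lra].
  apply Rmult_le_compat; auto using Rabs_pos.
Qed.

End Perturbation.

Lemma flat_cluster_direction Ls : unit_box m Ls ->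
  (forall rho eta, 0 < rho -> 0 < eta -> exists u0 lam, unit_box m lam /\
     (forall j, (j < m)%nat -> Rabs (lam j - Ls j) <= rho) /\ robust_near_optimal eta u0 lam) ->
  exists t0, (t0 < k)%nat /\
    forall t, (t < k)%nat -> dot n (dir Ls) (col L t) = dot n (dir Ls) (col L t0).
Proof.
  intros HLs Happrox.
  destruct (exists_uniform_scale n spread (fun i => p i / 2)) as [eps [Heps Heps_small]].
  { intros; apply spread_ge0. }
  { intros i Hi. pose proof (p_pos i Hi). lra. }
  set (q := fun tau i => p i + tau * dir Ls i).
  assert (Heps1 : Rabs eps <= eps) by (rewrite Rabs_right; lra).
  assert (Heps2 : Rabs (- eps) <= eps) by (rewrite Rabs_Ropp, Rabs_right; lra).
  destruct (psi_calibrated (q eps) (perturbed_weights_simplex eps Heps_small Ls eps HLs Heps1))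
    as [r1 [Hbad1 [u1 [Cu1 Hu1]]]].
  destruct (psi_calibrated (q (- eps)) (perturbed_weights_simplex eps Heps_small Ls (- eps) HLs Heps2))
    as [r2 [Hbad2 [u2 [Cu2 Hu2]]]].
  set (gap := Rmin (r1 - dot n (q eps) (psi u1)) (r2 - dot n (q (- eps)) (psi u2))).
  assert (Hgap1 : gap <= r1 - dot n (q eps) (psi u1)) by apply Rmin_l.
  assert (Hgap2 : gap <= r2 - dot n (q (- eps)) (psi u2)) by apply Rmin_r.
  assert (Hgap : 0 < gap) by (apply Rmin_pos; lra).
  pose proof (transfer_error_ge0 u1 Cu1). pose proof (transfer_error_ge0 u2 Cu2).
  set (E := transfer_error u1 + transfer_error u2).
  destruct (exists_small_errors (2 * INR n) (eps * E) gap) as [eta [rho [Heta [Hrho Hsmall]]]];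
    [pose proof (pos_INR n); lra|unfold E; nra|auto|].
  destruct (Happrox rho eta Hrho (proj1 Heta)) as [u0 [lam [Hbox [Hclose Hrob]]]].
  (* u0 is within gap / 2 of optimal for both q eps and q (- eps), so calibration forces its prediction *)
  assert (Hin : forall tau u' r, Rabs tau <= eps -> C u' -> transfer_error u' <= E ->
            dot n (q tau) (psi u') + gap <= r ->
            (forall u, C u -> ~ in_argmin n k L (q tau) (pred u) -> r <= dot n (q tau) (psi u)) ->
            in_argmin n k L (q tau) (pred u0)).
  { intros tau u' r Htau Cu' Hu' Hr Hbad. apply NNPP. intro Hnot.
    pose proof (Hbad u0 (proj1 Hrob) Hnot).
    pose proof (robust_near_optimal_transfer eps Heps_small eta rho u0 lam Ls tau u'
                  Heta Hrob Hbox Hclose Htau Cu').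
    assert (eps * rho * transfer_error u' <= eps * E * rho).
    { replace (eps * E * rho) with (eps * rho * E) by ring. apply Rmult_le_compat_l; nra. }
    unfold q in *. lra. }
  exists (pred u0). split.
  - apply (Hin eps u1 r1); auto; unfold E; lra.
  - apply (argmin_both_flat n k L p (dir Ls) c eps (pred u0)); auto.
    + apply (Hin eps u1 r1); auto; unfold E; lra.
    + apply (Hin (- eps) u2 r2); auto; unfold E; lra.
Qed.

Lemma low_dimensional_calibration_absurd : False.
Proof.
  destruct (choice (fun (N : nat) (ul : (nat -> R) * (nat -> R)) =>
     unit_box m (snd ul) /\ (exists j, (j < m)%nat /\ Rabs (snd ul j) = 1) /\
     robust_near_optimal (/ INR (S N)) (fst ul) (snd ul))) as [seq Hseq].
  { intros N. destruct (robust_near_optimal_exists (/ INR (S N))) as [u0 [lam H]].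
    - apply Rinv_0_lt_compat, lt_0_INR. lia.
    - exists (u0, lam). exact H. }
  destruct (bounded_vec_seq_cluster_point m (fun N => snd (seq N))) as [Ls HLs].
  { intros N j Hj. apply (proj1 (Hseq N)); auto. }
  assert (HLs_box : unit_box m Ls).
  { intros j Hj. apply Rabs_le_between. apply Rnot_lt_le. intro Hc.
    destruct (HLs (Rabs (Ls j) - 1) ltac:(lra) O) as [N [_ HN]]. specialize (HN j Hj). cbv beta in HN.
    assert (Rabs (snd (seq N) j) <= 1) by (apply Rabs_le, (proj1 (Hseq N) j Hj)).
    pose proof (Rabs_triang_inv (Ls j) (snd (seq N) j)). rewrite Rabs_minus_sym in HN. lra. }
  assert (HLs_nz : exists j, (j < m)%nat /\ Ls j <> 0).
  { destruct (HLs (1 / 2) ltac:(lra) O) as [N [_ HN]].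
    destruct (proj1 (proj2 (Hseq N))) as [j [Hj Hj1]].
    exists j. split; auto. intro E. specialize (HN j Hj). cbv beta in HN. rewrite E, Rminus_0_r in HN. lra. }
  destruct (flat_cluster_direction Ls HLs_box) as [t0 [Ht0 Hflat]].
  { intros rho eta Hrho Heta.
    destruct (eventually_inv_INR_le eta Heta) as [N0 HN0].
    destruct (HLs rho Hrho N0) as [N [HN Hclose]].
    destruct (Hseq N) as [Hbox [_ Hrob]].
    exists (fst (seq N)), (snd (seq N)). split; [auto|split].
    - intros j Hj. left. apply Hclose, Hj.
    - apply (robust_near_optimal_mono (/ INR (S N))); auto. }
  destruct HLs_nz as [j [Hj Hnz]]. apply Hnz.
  apply (direction_level_coeffs n k m L p c s p_sum p_level s_indep s_length Ls t0); auto.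
Qed.

End LowDimensionalSurrogate.

Theorem mainTheorem14 (n k : nat) (L : nat -> nat -> R) :
  nonneg_matrix n k L ->
  standing_assumption n k L ->
  (exists (p : nat -> R) (c : R),
      in_relint_simplex n p /\ 0 <= c /\
      forall t, (t < k)%nat -> dot n p (col L t) = c) ->
  forall m : nat, is_affdim n k L m ->
  forall d : nat, CCdim_admissible n k L d -> (m - 1 <= d)%nat.
Proof.
  intros _ _ [p [c [[p_pos p_sum] [_ p_level]]]] m [[s [s_indep s_length]] _] d
    [C [psi [HC [psi_nonneg [psi_convex [pred [_ psi_calibrated]]]]]]].
  destruct (Compare_dec.le_lt_dec m d) as [|d_lt_m]; [lia|].
  destruct (low_dimensional_calibration_absurd n k d m L p c s C psi pred p_pos p_sum p_level
              s_indep s_length HC psi_nonneg psi_convex psi_calibrated d_lt_m).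
Qed.
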